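(* Let $\hat\theta\in[0,\frac{\pi}{2}]$ and $1<\alpha\le 2$. Then $$\sin(\alpha\hat\theta)\ge\sin(\hat\theta)\cos^{\alpha-1}(\hat\theta),$$ where equality holds if and only if $\hat\theta=0$ in the case $1<\alpha<2$, and if and only if $\hat\theta=0$ or $\hat\theta=\frac{\pi}{2}$ in the case $\alpha=2$. *)

From Stdlib Require Import Reals.
Open Scope R_scope.

(* Real power x^y for x >= 0 and y > 0, with the convention 0^y = 0.
   (Stdlib's Rpower 0 y = exp (y * ln 0) is not the intended value.) *)
Definition rpow (x y : R) : R :=
  if Req_EM_T x 0 then 0 else Rpower x y.

(* For 0 < theta < PI/2 write alpha = 1 + b with 0 < b <= 1. Since ln cos is concave and
   vanishes at 0, cos (b theta) >= (cos theta)^b; hence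
   sin (alpha theta) = sin theta cos (b theta) + cos theta sin (b theta)
                     > sin theta cos (b theta) >= sin theta (cos theta)^b.
   At theta = 0 both sides vanish; at theta = PI/2 the right side vanishes while
   sin (alpha PI/2) is positive for alpha < 2 and zero for alpha = 2. *)
From Stdlib Require Import Reals Lra.
From Coquelicot Require Import Coquelicot.
Open Scope R_scope.

Lemma is_derive_ln_cos_mul_sub (b c : R) :
  0 < cos c -> 0 < cos (b * c) ->
  is_derive (fun t => ln (cos (b * t)) - b * ln (cos t)) c
    (b * sin ((1 - b) * c) / (cos c * cos (b * c))).
Proof.
  intros Hc Hbc.
  auto_derive; [lra|].
  replace ((1 - b) * c) with (c - b * c) by ring.
  rewrite sin_minus. field. lra.
Qed.

Lemma mul_ln_cos_le_ln_cos_mul (b t : R) :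
  0 <= b <= 1 -> 0 <= t < PI / 2 -> b * ln (cos t) <= ln (cos (b * t)).
Proof.
  intros Hb Ht.
  pose proof PI_RGT_0.
  destruct (Req_dec t 0) as [->|Ht0].
  { rewrite Rmult_0_r, cos_0, ln_1. lra. }
  destruct (MVT_cor2 (fun t => ln (cos (b * t)) - b * ln (cos t))
              (fun c => b * sin ((1 - b) * c) / (cos c * cos (b * c))) 0 t)
    as [c [Hmvt Hc]]; [lra| |].
  { intros c Hc. apply is_derive_Reals, is_derive_ln_cos_mul_sub.
    - apply cos_gt_0; lra.
    - apply cos_gt_0; nra. }
  assert (Hcos : 0 < cos c * cos (b * c)).
  { apply Rmult_lt_0_compat; apply cos_gt_0; nra. }
  assert (Hsin : 0 <= sin ((1 - b) * c)) by (apply sin_ge_0; nra).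
  assert (0 <= b * sin ((1 - b) * c) / (cos c * cos (b * c)) * (t - 0)).
  { apply Rmult_le_pos; [|lra].
    apply Rmult_le_pos; [nra|]. left; apply Rinv_0_lt_compat; lra. }
  rewrite Rmult_0_r, cos_0, ln_1 in Hmvt. lra.
Qed.

Lemma Rpower_cos_le_cos_mul (b t : R) :
  0 <= b <= 1 -> 0 <= t < PI / 2 -> Rpower (cos t) b <= cos (b * t).
Proof.
  intros Hb Ht.
  pose proof PI_RGT_0.
  assert (Hpos : 0 < cos (b * t)) by (apply cos_gt_0; nra).
  rewrite <- (exp_ln _ Hpos). unfold Rpower.
  destruct (Rle_lt_or_eq_dec _ _ (mul_ln_cos_le_ln_cos_mul b t Hb Ht)) as [Hlt|Heq].
  - left. apply exp_increasing, Hlt.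
  - right. rewrite Heq. reflexivity.
Qed.

Lemma sin_mul_gt_interior (theta alpha : R) :
  0 < theta < PI / 2 -> 1 < alpha <= 2 ->
  sin (alpha * theta) > sin theta * rpow (cos theta) (alpha - 1).
Proof.
  intros Ht Ha.
  pose proof PI_RGT_0.
  assert (Hsin : 0 < sin theta) by (apply sin_gt_0; lra).
  assert (Hcos : 0 < cos theta) by (apply cos_gt_0; lra).
  assert (Hsinb : 0 < sin ((alpha - 1) * theta)) by (apply sin_gt_0; nra).
  pose proof (Rpower_cos_le_cos_mul (alpha - 1) theta ltac:(lra) ltac:(lra)) as Hpow.
  unfold rpow. destruct (Req_EM_T (cos theta) 0); [lra|].
  replace (alpha * theta) with (theta + (alpha - 1) * theta) by ring.
  rewrite sin_plus.
  assert (0 < cos theta * sin ((alpha - 1) * theta)) by (apply Rmult_lt_0_compat; lra).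
  assert (sin theta * Rpower (cos theta) (alpha - 1)
          <= sin theta * cos ((alpha - 1) * theta)) by (apply Rmult_le_compat_l; lra).
  lra.
Qed.

Lemma rpow_cos_PI2 (y : R) : rpow (cos (PI / 2)) y = 0.
Proof.
  rewrite cos_PI2. unfold rpow.
  destruct (Req_EM_T 0 0); [reflexivity|lra].
Qed.

Theorem lemma2 (theta alpha : R)
  (Htheta : 0 <= theta <= PI / 2) (Halpha : 1 < alpha <= 2) :
  sin (alpha * theta) >= sin theta * rpow (cos theta) (alpha - 1) /\
  (alpha < 2 ->
     (sin (alpha * theta) = sin theta * rpow (cos theta) (alpha - 1)
      <-> theta = 0)) /\
  (alpha = 2 ->
     (sin (alpha * theta) = sin theta * rpow (cos theta) (alpha - 1)
      <-> theta = 0 \/ theta = PI / 2)).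
Proof.
  pose proof PI_RGT_0.
  destruct (Req_dec theta 0) as [->|Ht0].
  { rewrite Rmult_0_r, sin_0, Rmult_0_l.
    repeat split; intros; auto; lra. }
  destruct (Req_dec theta (PI / 2)) as [->|Htpi].
  { rewrite rpow_cos_PI2, Rmult_0_r.
    destruct (Req_dec alpha 2) as [->|Ha2].
    - replace (2 * (PI / 2)) with PI by field. rewrite sin_PI.
      repeat split; intros; auto; lra.
    - assert (0 < sin (alpha * (PI / 2))) by (apply sin_gt_0; nra).
      repeat split; intros; lra. }
  pose proof (sin_mul_gt_interior theta alpha ltac:(lra) Halpha).
  repeat split; intros; lra.
Qed.
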